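(* Let $S$ and $T$ be monoids. Then $S\times T$ is finitely right equated if and only if both $S$ and $T$ are finitely right equated.
   Context: For a semigroup $S$ and $a\in S$, $\mathbf{r}_S(a)=\{(s,t)\in S\times S\mid as=at\}$; $S$ is finitely right equated if each $\mathbf{r}_S(a)$ is finitely generated as a right congruence (the smallest right congruence containing some finite set). *)

From Stdlib Require Import List.
Import ListNotations.

Record Monoid := {
  carrier :> Type;
  mul : carrier -> carrier -> carrier;
  one : carrier;
  mul_assoc : forall x y z, mul x (mul y z) = mul (mul x y) z;
  mul_1l : forall x, mul one x = x;
  mul_1r : forall x, mul x one = x
}.

Arguments mul {m} _ _.
Arguments one {m}.

Definition prod_monoid (S T : Monoid) : Monoid.
Proof.
  refine {| carrier := (carrier S * carrier T)%type;
            mul := fun p q => (mul (fst p) (fst q), mul (snd p) (snd q));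
            one := (one, one) |}.
  - intros [] [] []; simpl; rewrite !mul_assoc; reflexivity.
  - intros []; simpl; rewrite !mul_1l; reflexivity.
  - intros []; simpl; rewrite !mul_1r; reflexivity.
Defined.

Definition right_congruence (S : Monoid) (rho : S -> S -> Prop) : Prop :=
  (forall s, rho s s) /\
  (forall s t, rho s t -> rho t s) /\
  (forall s t u, rho s t -> rho t u -> rho s u) /\
  (forall s t u, rho s t -> rho (mul s u) (mul t u)).

Definition gen_right_congruence (S : Monoid) (X : (S * S)%type -> Prop) (s t : S) : Prop :=
  forall rho, right_congruence S rho -> (forall p, X p -> rho (fst p) (snd p)) -> rho s t.

Definition fg_right_congruence (S : Monoid) (rho : S -> S -> Prop) : Prop :=
  exists X : list (S * S)%type,
    forall s t, rho s t <-> gen_right_congruence S (fun p => In p X) s t.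

Definition r_ann (S : Monoid) (a : S) (s t : S) : Prop := mul a s = mul a t.

Definition finitely_right_equated (S : Monoid) : Prop :=
  forall a : S, fg_right_congruence S (r_ann S a).

(* A generating set of [r(a, 1)] in [S * T] projects to one of [r(a)] in [S],
   because [s |-> (s, 1)] is a multiplicative section of the multiplicative
   first projection; similarly for [T].  Conversely, if [X]
   generates [r(a)] and [Y] generates [r(b)], then the pairs of [X] padded
   with [1] in the second coordinate together with those of [Y] padded in the
   first generate [r(a, b)]: from [(s1, 1) ~ (s2, 1)] and [(1, t1) ~ (1, t2)]
   right multiplication gives [(s1, t1) ~ (s2, t1) ~ (s2, t2)]. *)
From Stdlib Require Import List.

Section RightCongruenceClosure.
Variable M : Monoid.

Inductive rc_closure (X : (M * M)%type -> Prop) : M -> M -> Prop :=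
| rc_closure_base p : X p -> rc_closure X (fst p) (snd p)
| rc_closure_refl s : rc_closure X s s
| rc_closure_sym s t : rc_closure X s t -> rc_closure X t s
| rc_closure_trans s t u : rc_closure X s t -> rc_closure X t u -> rc_closure X s u
| rc_closure_mulr s t u : rc_closure X s t -> rc_closure X (mul s u) (mul t u).

Lemma rc_closure_right_congruence X : right_congruence M (rc_closure X).
Proof. repeat split; eauto using rc_closure. Qed.

Lemma rc_closure_least X (rho : M -> M -> Prop) :
  right_congruence M rho -> (forall p, X p -> rho (fst p) (snd p)) ->
  forall s t, rc_closure X s t -> rho s t.
Proof. intros [Hrefl [Hsym [Htrans Hmul]]] HX s t H; induction H; eauto. Qed.

Lemma gen_right_congruenceE X s t :
  gen_right_congruence M X s t <-> rc_closure X s t.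
Proof.
  split.
  - intro H. apply H; [apply rc_closure_right_congruence | apply rc_closure_base].
  - intros H rho Hrho HX. exact (rc_closure_least X rho Hrho HX s t H).
Qed.

Lemma rc_closure_mulr_eq X s t u s' t' :
  rc_closure X s t -> mul s u = s' -> mul t u = t' -> rc_closure X s' t'.
Proof. intros H <- <-. now apply rc_closure_mulr. Qed.

Lemma fg_right_congruenceP (rho : M -> M -> Prop) :
  right_congruence M rho ->
  fg_right_congruence M rho <->
  exists X : list (M * M)%type,
    (forall p, In p X -> rho (fst p) (snd p)) /\
    (forall s t, rho s t -> rc_closure (fun p => In p X) s t).
Proof.
  intro Hrho. split.
  - intros [X HX]. exists X. split.
    + intros p Hp. apply HX, gen_right_congruenceE. now apply rc_closure_base.
    + intros s t Hst. now apply gen_right_congruenceE, HX.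
  - intros [X [Hgen Hcl]]. exists X. intros s t.
    rewrite gen_right_congruenceE. split; [apply Hcl |].
    exact (rc_closure_least _ rho Hrho Hgen s t).
Qed.

Lemma r_ann_right_congruence (a : M) : right_congruence M (r_ann M a).
Proof.
  unfold r_ann; repeat split; intros; try congruence.
  rewrite !mul_assoc. congruence.
Qed.

End RightCongruenceClosure.

Arguments rc_closure {M} X _ _.

Definition multiplicative (M N : Monoid) (f : M -> N) : Prop :=
  forall x y, f (mul x y) = mul (f x) (f y).

Definition map_pair {A B : Type} (f : A -> B) (p : A * A) : B * B :=
  (f (fst p), f (snd p)).

Lemma rc_closure_map (M N : Monoid) (f : M -> N) X Y :
  multiplicative M N f -> (forall p, X p -> Y (map_pair f p)) ->
  forall s t, rc_closure X s t -> rc_closure Y (f s) (f t).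
Proof.
  intros Hf HXY s t H; induction H; eauto using rc_closure.
  - exact (rc_closure_base N Y _ (HXY p H)).
  - rewrite !Hf. now apply rc_closure_mulr.
Qed.

Lemma in_map_pair {A B : Type} (f : A -> B) p X :
  In p X -> In (map_pair f p) (map (map_pair f) X).
Proof. apply in_map. Qed.

Lemma finitely_right_equated_retract (M N : Monoid) (f : M -> N) (g : N -> M) :
  multiplicative M N f -> multiplicative N M g -> (forall x, f (g x) = x) ->
  finitely_right_equated M -> finitely_right_equated N.
Proof.
  intros Hf Hg Hfg HM a.
  apply fg_right_congruenceP; [apply r_ann_right_congruence |].
  destruct (proj1 (fg_right_congruenceP M _ (r_ann_right_congruence M (g a))) (HM (g a)))
    as [Z [HZgen HZcl]].
  exists (map (map_pair f) Z). split.
  - intros p Hp. apply in_map_iff in Hp as [z [<- Hz]].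
    unfold r_ann, map_pair; cbn.
    rewrite <- (Hfg a), <- !Hf. f_equal. exact (HZgen z Hz).
  - intros s t Hst. rewrite <- (Hfg s), <- (Hfg t).
    apply (rc_closure_map M N f _ _ Hf (fun p => in_map_pair f p Z)).
    apply HZcl. unfold r_ann in *. rewrite <- !Hg. now f_equal.
Qed.

Section Product.
Variables S T : Monoid.

Definition inl_prod (s : S) : prod_monoid S T := (s, one).
Definition inr_prod (t : T) : prod_monoid S T := (one, t).

Lemma inl_prod_multiplicative : multiplicative S (prod_monoid S T) inl_prod.
Proof. intros x y. unfold inl_prod; cbn. now rewrite mul_1l. Qed.

Lemma inr_prod_multiplicative : multiplicative T (prod_monoid S T) inr_prod.
Proof. intros x y. unfold inr_prod; cbn. now rewrite mul_1l. Qed.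

Lemma fst_multiplicative : multiplicative (prod_monoid S T) S fst.
Proof. now intros. Qed.

Lemma snd_multiplicative : multiplicative (prod_monoid S T) T snd.
Proof. now intros. Qed.

Definition prod_generators (X : list (S * S)%type) (Y : list (T * T)%type)
  : list (prod_monoid S T * prod_monoid S T)%type :=
  map (map_pair inl_prod) X ++ map (map_pair inr_prod) Y.

Lemma r_ann_prod_generators (a : S) (b : T) X Y :
  (forall p, In p X -> r_ann S a (fst p) (snd p)) ->
  (forall p, In p Y -> r_ann T b (fst p) (snd p)) ->
  forall p, In p (prod_generators X Y) ->
    r_ann (prod_monoid S T) (a, b) (fst p) (snd p).
Proof.
  intros HX HY p Hp. unfold r_ann.
  apply in_app_or in Hp as [Hp | Hp]; apply in_map_iff in Hp as [q [<- Hq]]; cbn.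
  - now rewrite (HX q Hq).
  - now rewrite (HY q Hq).
Qed.

Lemma rc_closure_prod_generators X Y s1 s2 t1 t2 :
  rc_closure (fun p => In p X) s1 s2 -> rc_closure (fun p => In p Y) t1 t2 ->
  rc_closure (fun p => In p (prod_generators X Y))
    ((s1, t1) : prod_monoid S T) (s2, t2).
Proof.
  intros Hs Ht.
  assert (Hs' : rc_closure (fun p => In p (prod_generators X Y)) (inl_prod s1) (inl_prod s2)).
  { apply (rc_closure_map _ _ _ (fun p => In p X) _ inl_prod_multiplicative); [| exact Hs].
    intros p Hp. apply in_or_app. left. now apply in_map_pair. }
  assert (Ht' : rc_closure (fun p => In p (prod_generators X Y)) (inr_prod t1) (inr_prod t2)).
  { apply (rc_closure_map _ _ _ (fun p => In p Y) _ inr_prod_multiplicative); [| exact Ht].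
    intros p Hp. apply in_or_app. right. now apply in_map_pair. }
  apply rc_closure_trans with (s2, t1).
  - apply (rc_closure_mulr_eq _ _ _ _ (inr_prod t1) _ _ Hs');
      unfold inl_prod, inr_prod; cbn; now rewrite mul_1r, mul_1l.
  - apply (rc_closure_mulr_eq _ _ _ _ (inl_prod s2) _ _ Ht');
      unfold inl_prod, inr_prod; cbn; now rewrite mul_1r, mul_1l.
Qed.

Lemma finitely_right_equated_prod :
  finitely_right_equated S -> finitely_right_equated T ->
  finitely_right_equated (prod_monoid S T).
Proof.
  intros HS HT [a b].
  apply fg_right_congruenceP; [apply r_ann_right_congruence |].
  destruct (proj1 (fg_right_congruenceP S _ (r_ann_right_congruence S a)) (HS a))
    as [X [HXgen HXcl]].
  destruct (proj1 (fg_right_congruenceP T _ (r_ann_right_congruence T b)) (HT b))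
    as [Y [HYgen HYcl]].
  exists (prod_generators X Y).
  split; [exact (r_ann_prod_generators a b X Y HXgen HYgen) |].
  intros [s1 t1] [s2 t2] H. unfold r_ann in H; cbn in H. injection H as Hs Ht.
  apply rc_closure_prod_generators; [apply HXcl | apply HYcl]; assumption.
Qed.

End Product.

Theorem mainTheorem8 (S T : Monoid) :
  finitely_right_equated (prod_monoid S T) <->
  (finitely_right_equated S /\ finitely_right_equated T).
Proof.
  split.
  - intro H. split.
    + exact (finitely_right_equated_retract (prod_monoid S T) S fst (inl_prod S T)
               (fst_multiplicative S T) (inl_prod_multiplicative S T) (fun _ => eq_refl) H).
    + exact (finitely_right_equated_retract (prod_monoid S T) T snd (inr_prod S T)
               (snd_multiplicative S T) (inr_prod_multiplicative S T) (fun _ => eq_refl) H).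
  - intros [HS HT]. exact (finitely_right_equated_prod S T HS HT).
Qed.
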